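(* Let $\{(G_\alpha,d_\alpha)\}_{\alpha\in\mathbb I}$ be a strict long directed family of metrizable topological groups, $d_\alpha$ a compatible metric on $G_\alpha$, whose bonding maps (inclusions $G_\alpha\to G_\beta$, $\alpha\leq\beta$, which are group homomorphisms) are Lipschitz with a fixed constant $L>0$ (in particular, isometries). Then $\{G_\alpha\}_{\alpha\in\mathbb I}$ satisfies ACP, and the colimit space topology on $G=\bigcup_\alpha G_\alpha$ is generated by the metric $$d(x,y):=\limsup_{\alpha\in\mathbb I}d_\alpha(x,y)=\inf_{\alpha\in\mathbb I}\sup\{d_\beta(x,y)\mid x,y\in G_\beta,\ \beta\geq\alpha\}.$$
   Context: Strict means the bonding maps are topological embeddings; long means every countable subset of $\mathbb I$ has an upper bound. The colimit space topology is $\mathscr T=\{U\subseteq G\mid U\cap G_\alpha\text{ open in }G_\alpha\ \forall\alpha\}$. ACP means $\mathscr T$ coincides with the finest group topology on $G$ making all inclusions continuous (equivalently, $(G,\mathscr T)$ is a topological group). *)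

From mathcomp Require Import all_boot all_order all_algebra.
From mathcomp Require Import all_classical all_reals ereal.
Set Implicit Arguments. Unset Strict Implicit. Unset Printing Implicit Defensive.
Import Order.TTheory GRing.Theory Num.Theory.
Local Open Scope classical_set_scope.
Local Open Scope ring_scope.

Section Defs.
Variable R : realType.

Definition is_group (G : Type) (mul : G -> G -> G) (inv : G -> G) (e : G) :=
  [/\ forall x y z, mul x (mul y z) = mul (mul x y) z,
      forall x, mul e x = x /\ mul x e = x &
      forall x, mul (inv x) x = e /\ mul x (inv x) = e].

Definition is_subgroup (G : Type) (mul : G -> G -> G) (inv : G -> G) (e : G)
  (A : set G) :=
  [/\ A e, forall x y, A x -> A y -> A (mul x y) & forall x, A x -> A (inv x)].

Definition metric_on (G : Type) (A : set G) (d : G -> G -> R) :=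
  forall x y z, A x -> A y -> A z ->
    [/\ 0 <= d x y, d x y = 0 <-> x = y, d x y = d y x &
        d x z <= d x y + d y z].

Definition mopen (G : Type) (A : set G) (d : G -> G -> R) (U : set G) :=
  U `<=` A /\
  forall x, U x -> exists2 eps : R, 0 < eps &
    forall y, A y -> d x y < eps -> U y.

Definition prod_open (G : Type) (tau : set G -> Prop) (W : set (G * G)) :=
  forall p, W p -> exists U, exists V,
    [/\ tau U, tau V, U p.1, V p.2 & U `*` V `<=` W].

Definition is_topological_group (G : Type) (mul : G -> G -> G) (inv : G -> G)
  (e : G) (A : set G) (tau : set G -> Prop) :=
  [/\ is_subgroup mul inv e A,
      forall U, tau U ->
        prod_open tau [set p | A p.1 /\ A p.2 /\ U (mul p.1 p.2)] &
      forall U, tau U -> tau [set x | A x /\ U (inv x)]].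

Definition long_directed (I : Type) (le : I -> I -> Prop) :=
  [/\ forall i, le i i,
      forall i j k, le i j -> le j k -> le i k,
      forall i j, exists k, le i k /\ le j k &
      forall S : set I, countable S -> exists u, forall i, S i -> le i u].

Definition colim_open (I G : Type) (Gs : I -> set G) (d : I -> G -> G -> R)
  (U : set G) := forall a, mopen (Gs a) (d a) (U `&` Gs a).

Definition colim_dist (I G : Type) (le : I -> I -> Prop) (Gs : I -> set G)
  (d : I -> G -> G -> R) (x y : G) : \bar R :=
  ereal_inf [set ereal_sup [set (d b x y)%:E | b in [set b | le a b /\ Gs b x /\ Gs b y]]
            | a in [set: I]].

End Defs.

From mathcomp Require Import all_boot all_order all_algebra.
From mathcomp Require Import all_classical all_reals ereal.
Set Implicit Arguments. Unset Strict Implicit.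
Import Order.TTheory GRing.Theory Num.Theory.
Local Open Scope classical_set_scope.
Local Open Scope ring_scope.

(* For each pair
   x, y the infimum defining d(x, y) is approximated along a sequence of
   indices, so beyond a single index u every d_b(x, y) is at most d(x, y);
   conversely d <= L d_a on G_a.  Hence a d-convergent sequence y_n -> x lives,
   together with x, in one G_u, where d_u(x, y_n) <= d(x, y_n) -> 0.  Metric
   topologies being sequential, the colimit topology is the d-topology, and
   continuity of the group operations on G_u passes to G. *)

Lemma exists_natSinv_lt (R : realType) (eps : R) :
  0 < eps -> exists n : nat, n.+1%:R^-1 < eps.
Proof.
move=> eps_gt0; exists (Num.truncn eps^-1).
by rewrite invf_plt ?posrE ?ltr0Sn //; exact: truncnS_gt.
Qed.

Lemma exists_ball_of_seq (R : realType) (T : Type) (f : T -> R) (P : T -> Prop) :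
  (forall ys : nat -> T, (forall n, f (ys n) < n.+1%:R^-1) -> exists n, P (ys n)) ->
  exists2 eps : R, 0 < eps & forall y, f y < eps -> P y.
Proof.
move=> hseq; apply: contrapT => no_ball.
have bad n : exists y, f y < n.+1%:R^-1 /\ ~ P y.
  apply: contrapT => hn; apply: no_ball; exists n.+1%:R^-1.
    by rewrite invr_gt0 ltr0Sn.
  by move=> y fy; apply: contrapT => nPy; apply: hn; exists y.
have [ys hys] := choice bad.
by have [n] := hseq ys (fun n => (hys n).1); exact: (hys n).2.
Qed.

Lemma long_directed_ub_seq (I : Type) (le : I -> I -> Prop) :
  long_directed le -> forall a : nat -> I, exists u, forall n, le (a n) u.
Proof.
case=> _ _ _ hlong a; have [u hu] := hlong (range a) (card_image_le _ _).
by exists u => n; apply: hu; exists n.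
Qed.

Section ColimDist.
Variables (R : realType) (I G : Type) (le : I -> I -> Prop).
Variables (Gs : I -> set G) (d : I -> G -> G -> R) (L : R).
Hypothesis le_long : long_directed le.
Hypothesis Gs_cover : forall x, exists a, Gs a x.
Hypothesis Gs_mono : forall a b, le a b -> Gs a `<=` Gs b.
Hypothesis d_metric : forall a, metric_on (Gs a) (d a).
Hypothesis d_Lipschitz :
  forall a b, le a b -> forall x y, Gs a x -> Gs a y -> d b x y <= L * d a x y.

Local Notation cdist := (colim_dist le Gs d).

Definition tail_sup a x y : \bar R :=
  ereal_sup [set (d b x y)%:E | b in [set b | le a b /\ Gs b x /\ Gs b y]].

Lemma colim_dist_le_tail_sup a x y : (cdist x y <= tail_sup a x y)%E.
Proof. by apply: ereal_inf_lbound; exists a. Qed.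

Lemma tail_sup_ge a b x y :
  le a b -> Gs b x -> Gs b y -> ((d b x y)%:E <= tail_sup a x y)%E.
Proof. by move=> ab bx b_y; apply: ereal_sup_ubound; exists b. Qed.

Lemma tail_supC a x y : tail_sup a x y = tail_sup a y x.
Proof.
by congr ereal_sup; apply/seteqP; split=> _ [b [ab [bx b_y]] <-]; exists b;
  rewrite //; have [_ _ -> _] := d_metric bx b_y bx.
Qed.

Lemma colim_distC x y : cdist x y = cdist y x.
Proof.
by congr ereal_inf; apply/seteqP; split=> _ [a _ <-]; exists a;
  rewrite // -/(tail_sup a _ _) tail_supC.
Qed.

Lemma colim_dist_le_Lipschitz a x y :
  Gs a x -> Gs a y -> (cdist x y <= (L * d a x y)%:E)%E.
Proof.
move=> ax ay; apply: le_trans (colim_dist_le_tail_sup a x y) _.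
by apply: ge_ereal_sup => _ [b [ab [bx b_y]] <-]; rewrite lee_fin; exact: d_Lipschitz.
Qed.

Lemma exists_common_index x y : exists c, Gs c x /\ Gs c y.
Proof.
have [_ _ le_join _] := le_long.
have [a ax] := Gs_cover x; have [b b_y] := Gs_cover y.
have [c [ac bc]] := le_join a b.
by exists c; split; [exact: Gs_mono ac _ ax | exact: Gs_mono bc _ b_y].
Qed.

Lemma colim_dist_ge0 x y : (0 <= cdist x y)%E.
Proof.
have [_ _ le_join _] := le_long; have [c [cx cy]] := exists_common_index x y.
apply: le_ereal_inf_tmp => _ [a _ <-]; have [k [ak ck]] := le_join a c.
have kx := Gs_mono ck cx; have ky := Gs_mono ck cy.
apply: le_trans (tail_sup_ge ak kx ky); rewrite lee_fin.
by have [] := d_metric kx ky kx.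
Qed.

Lemma colim_dist_fin_num x y : cdist x y \is a fin_num.
Proof.
have [c [cx cy]] := exists_common_index x y.
rewrite ge0_fin_numE ?colim_dist_ge0 //.
exact: le_lt_trans (colim_dist_le_Lipschitz cx cy) (ltry _).
Qed.

Lemma colim_dist_fine_le a x y :
  Gs a x -> Gs a y -> fine (cdist x y) <= L * d a x y.
Proof.
by move=> ax ay; rewrite -lee_fin fineK ?colim_dist_fin_num ?colim_dist_le_Lipschitz.
Qed.

Lemma colim_dist_eventually_ge x y : exists u, forall b, le u b ->
  [/\ Gs b x, Gs b y & d b x y <= fine (cdist x y)].
Proof.
have [_ le_tr le_join _] := le_long; have [c [cx cy]] := exists_common_index x y.
have fin := colim_dist_fin_num x y.
(* Longness bounds the indices a_n at which the infimum is reached within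
   1/(n+1), so one index u serves all n at once. *)
have approx n : exists a, (tail_sup a x y < cdist x y + (n.+1%:R^-1)%:E)%E.
  have n_gt0 : 0 < n.+1%:R^-1 :> R by rewrite invr_gt0 ltr0Sn.
  by have [_ [a _ <-] ha] := lb_ereal_inf_adherent n_gt0 fin; exists a.
have [a ha] := choice approx; have [u1 hu1] := long_directed_ub_seq le_long a.
have [u [u1u cu]] := le_join u1 c.
exists u => b ub; have cb := le_tr _ _ _ cu ub.
have bx := Gs_mono cb cx; have b_y := Gs_mono cb cy.
split=> //; apply/ler_addgt0Pr => eps eps_gt0.
have [n n_lt] := exists_natSinv_lt eps_gt0.
have a_b : le (a n) b := le_tr _ _ _ (le_tr _ _ _ (hu1 n) u1u) ub.
rewrite -lee_fin EFinD fineK //; apply/ltW.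
apply: le_lt_trans (tail_sup_ge a_b bx b_y) (lt_trans (ha n) _).
by rewrite lteD2lE ?lte_fin.
Qed.

Lemma colim_dist_metric : metric_on [set: G] (fun x y => fine (cdist x y)).
Proof.
have [le_refl le_tr le_join _] := le_long.
have fine_ge0 p q : 0 <= fine (cdist p q).
  by rewrite -lee_fin fineK ?colim_dist_fin_num ?colim_dist_ge0.
move=> x y z _ _ _; split=> //.
- split=> [cxy0|<-].
    have [u hu] := colim_dist_eventually_ge x y; have [ux uy le0] := hu u (le_refl u).
    have [d_ge0 [d0 _] _ _] := d_metric ux uy ux.
    by apply: d0; apply/eqP; rewrite eq_le d_ge0 andbT -cxy0.
  have [c cx] := Gs_cover x; have [_ [_ dxx] _ _] := d_metric cx cx cx.
  apply/eqP; rewrite eq_le fine_ge0 andbT.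
  by have := colim_dist_fine_le cx cx; rewrite dxx // mulr0.
- by rewrite colim_distC.
- have [u1 hu1] := colim_dist_eventually_ge x y.
  have [u2 hu2] := colim_dist_eventually_ge y z.
  have [k [u1k u2k]] := le_join u1 u2.
  rewrite -lee_fin fineK ?colim_dist_fin_num // EFinD.
  apply: le_trans (colim_dist_le_tail_sup k x z) _.
  apply: ge_ereal_sup => _ [b [kb [bx bz]] <-]; rewrite lee_fin.
  have [_ b_y dxy] := hu1 b (le_tr _ _ _ u1k kb).
  have [_ _ dyz] := hu2 b (le_tr _ _ _ u2k kb).
  have [_ _ _ tri] := d_metric bx b_y bz.
  exact: le_trans tri (lerD dxy dyz).
Qed.

End ColimDist.

Section ComparableMetric.
Variables (R : realType) (I G : Type) (le : I -> I -> Prop).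
Variables (Gs : I -> set G) (d : I -> G -> G -> R) (r : G -> G -> R) (L : R).
Hypothesis le_long : long_directed le.
Hypothesis r_metric : metric_on [set: G] r.
Hypothesis r_eventually_ge : forall x y, exists u, forall b, le u b ->
  [/\ Gs b x, Gs b y & d b x y <= r x y].
Hypothesis L_gt0 : 0 < L.
Hypothesis r_le : forall a x y, Gs a x -> Gs a y -> r x y <= L * d a x y.

Lemma r_refl x : r x x = 0.
Proof. by have [_ [_ ->]] := @r_metric x x x Logic.I Logic.I Logic.I. Qed.

Lemma eventually_ge_seq (p q : nat -> G) : exists u, forall b, le u b -> forall n,
  [/\ Gs b (p n), Gs b (q n) & d b (p n) (q n) <= r (p n) (q n)].
Proof.
have [_ le_tr _ _] := le_long.
have [f hf] := choice (fun n => r_eventually_ge (p n) (q n)).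
have [u hu] := long_directed_ub_seq le_long f.
by exists u => b ub n; apply: hf; exact: le_tr (hu n) ub.
Qed.

(* By contraposition along sequences: a sequence r-converging to (p1, p2)
   lies in a single level G_k on which d_k <= r, so it d_k-converges. *)
Lemma colim_ball2 (P : G -> G -> Prop) p1 p2 :
  (forall a, Gs a p1 -> Gs a p2 -> exists2 eps : R, 0 < eps &
     forall y1 y2, Gs a y1 -> Gs a y2 ->
       d a p1 y1 < eps -> d a p2 y2 < eps -> P y1 y2) ->
  exists2 eps : R, 0 < eps &
    forall y1 y2, r p1 y1 < eps -> r p2 y2 < eps -> P y1 y2.
Proof.
move=> hP; have [_ _ le_join _] := le_long.
have [eps eps_gt0 hball] : exists2 eps : R, 0 < eps & forall q : G * G,
    Num.max (r p1 q.1) (r p2 q.2) < eps -> P q.1 q.2.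
  apply: exists_ball_of_seq => ys ys_lt.
  have [u1 hu1] := eventually_ge_seq (fun=> p1) (fun n => (ys n).1).
  have [u2 hu2] := eventually_ge_seq (fun=> p2) (fun n => (ys n).2).
  have [k [u1k u2k]] := le_join u1 u2.
  have [p1k _ _] := hu1 k u1k 0%N; have [p2k _ _] := hu2 k u2k 0%N.
  have [eps eps_gt0 hk] := hP k p1k p2k.
  have [n n_lt] := exists_natSinv_lt eps_gt0.
  have [_ y1k le1] := hu1 k u1k n; have [_ y2k le2] := hu2 k u2k n.
  exists n; move: (ys_lt n); rewrite gt_max => /andP[lt1 lt2].
  by apply: hk => //; [apply: le_lt_trans le1 (lt_trans lt1 n_lt)
                      | apply: le_lt_trans le2 (lt_trans lt2 n_lt)].
by exists eps => // y1 y2 lt1 lt2; apply: (hball (y1, y2)); rewrite gt_max lt1.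
Qed.

Lemma colim_ball (P : G -> Prop) x :
  (forall a, Gs a x -> exists2 eps : R, 0 < eps &
     forall y, Gs a y -> d a x y < eps -> P y) ->
  exists2 eps : R, 0 < eps & forall y, r x y < eps -> P y.
Proof.
move=> hP; have [|eps eps_gt0 hball] := @colim_ball2 (fun y _ => P y) x x.
  move=> a ax _; have [eps eps_gt0 hx] := hP a ax.
  by exists eps => // y1 y2 y1a _ lt1 _; exact: hx.
by exists eps => // y lt; apply: (hball y x lt); rewrite r_refl.
Qed.

Lemma mopen_colim_open U : mopen [set: G] r U -> colim_open Gs d U.
Proof.
move=> [_ hU] a; split=> [y []//|x [Ux ax]].
have [eps eps_gt0 hball] := hU x Ux.
exists (eps / L) => [|y ay dxy]; first by rewrite divr_gt0.
split=> //; apply: hball => //; apply: le_lt_trans (r_le ax ay) _.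
by rewrite mulrC -ltr_pdivlMr.
Qed.

Lemma colim_open_mopen U : colim_open Gs d U -> mopen [set: G] r U.
Proof.
move=> hU; split=> // x Ux.
have [|eps eps_gt0 hball] := @colim_ball U x; last by exists eps => // y _ /hball.
move=> a ax; have [eps eps_gt0 hx] := (hU a).2 x (conj Ux ax).
by exists eps => // y ay /(hx _ ay) [].
Qed.

Lemma colim_open_mopenE U : colim_open Gs d U <-> mopen [set: G] r U.
Proof. by split; [exact: colim_open_mopen | exact: mopen_colim_open]. Qed.

Lemma ball_colim_open x eps : colim_open Gs d [set y | r x y < eps].
Proof.
apply: mopen_colim_open; split=> // y /= xy; exists (eps - r x y).
  by rewrite subr_gt0.
move=> z _ yz /=; have [_ _ _ tri] := @r_metric x y z Logic.I Logic.I Logic.I.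
by apply: le_lt_trans tri _; rewrite -ltrBrDl.
Qed.

Section GroupTopology.
Variables (mul : G -> G -> G) (inv : G -> G) (e : G).
Hypothesis Gs_tg :
  forall a, is_topological_group mul inv e (Gs a) (mopen (Gs a) (d a)).

Lemma colim_open_mul_continuous U : colim_open Gs d U ->
  prod_open (colim_open Gs d) [set p | [set: G] p.1 /\ [set: G] p.2 /\ U (mul p.1 p.2)].
Proof.
move=> hU p [_ [_ Up]].
have [|eps eps_gt0 hball] := @colim_ball2 (fun y1 y2 => U (mul y1 y2)) p.1 p.2.
  move=> a p1a p2a; have [[_ mulG _] mul_cont _] := Gs_tg a.
  have [V1 [V2 [[_ oV1] [_ oV2] p1V1 p2V2 sub]]] :=
    mul_cont _ (hU a) p (conj p1a (conj p2a (conj Up (mulG _ _ p1a p2a)))).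
  have [eps1 eps1_gt0 h1] := oV1 _ p1V1; have [eps2 eps2_gt0 h2] := oV2 _ p2V2.
  exists (Num.min eps1 eps2) => [|y1 y2 y1a y2a]; first by rewrite lt_min eps1_gt0.
  rewrite !lt_min => /andP[lt1 _] /andP[_ lt2].
  by have [_ [_ []]] := sub (y1, y2) (conj (h1 _ y1a lt1) (h2 _ y2a lt2)).
exists [set y | r p.1 y < eps], [set y | r p.2 y < eps].
split; rewrite /= ?r_refl //; try exact: ball_colim_open.
by move=> q [/= lt1 lt2]; do 2!split=> //; exact: hball.
Qed.

Lemma colim_open_inv_continuous U : colim_open Gs d U ->
  colim_open Gs d [set x | [set: G] x /\ U (inv x)].
Proof.
move=> hU; apply/mopen_colim_open; split=> // x [_ Uix].
have [|eps eps_gt0 hball] := @colim_ball (fun y => U (inv y)) x.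
  move=> a ax; have [[_ _ invG] _ inv_cont] := Gs_tg a.
  have [_ oinv] := inv_cont _ (hU a).
  have [eps eps_gt0 hx] := oinv x (conj ax (conj Uix (invG _ ax))).
  by exists eps => // y ay /(hx _ ay) [_ []].
by exists eps => // y _ /hball.
Qed.

Lemma colim_open_topological_group :
  is_topological_group mul inv e [set: G] (colim_open Gs d).
Proof.
split; [by [] | exact: colim_open_mul_continuous | exact: colim_open_inv_continuous].
Qed.

End GroupTopology.

End ComparableMetric.

Theorem corollary2p10 (R : realType) (I : Type) (le : I -> I -> Prop)
  (G : Type) (mul : G -> G -> G) (inv : G -> G) (e : G)
  (Gs : I -> set G) (d : I -> G -> G -> R) (L : R) :
  long_directed le ->
  is_group mul inv e ->
  (* G is the union of the increasing family of subgroups G_a *)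
  (forall x, exists a, Gs a x) ->
  (forall a b, le a b -> Gs a `<=` Gs b) ->
  (* each (G_a, d_a) is a metric space whose metric topology is a group topology *)
  (forall a, metric_on (Gs a) (d a)) ->
  (forall a, is_topological_group mul inv e (Gs a) (mopen (Gs a) (d a))) ->
  (* strict: the inclusions G_a -> G_b are topological embeddings *)
  (forall a b, le a b -> forall U,
     mopen (Gs a) (d a) U <-> exists2 V, mopen (Gs b) (d b) V & U = V `&` Gs a) ->
  (* bonding maps are L-Lipschitz *)
  0 < L ->
  (forall a b, le a b -> forall x y, Gs a x -> Gs a y -> d b x y <= L * d a x y) ->
  (* conclusions: ACP, and the colimit topology is generated by the metric d *)
  is_topological_group mul inv e [set: G] (colim_open Gs d) /\
  (forall x y, colim_dist le Gs d x y \is a fin_num) /\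
  metric_on [set: G] (fun x y => fine (colim_dist le Gs d x y)) /\
  (forall U, colim_open Gs d U <->
     mopen [set: G] (fun x y => fine (colim_dist le Gs d x y)) U).
Proof.
move=> le_long _ Gs_cover Gs_mono d_metric Gs_tg _ L_gt0 d_Lip.
have cd_metric := colim_dist_metric le_long Gs_cover Gs_mono d_metric d_Lip.
have cd_ev := colim_dist_eventually_ge le_long Gs_cover Gs_mono d_metric d_Lip.
have cd_le := colim_dist_fine_le le_long Gs_cover Gs_mono d_metric d_Lip.
split; first exact: (colim_open_topological_group le_long cd_metric cd_ev L_gt0 cd_le Gs_tg).
split; first exact: colim_dist_fin_num le_long Gs_cover Gs_mono d_metric d_Lip.
split=> //.
exact: (colim_open_mopenE le_long cd_metric cd_ev L_gt0 cd_le).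
Qed.
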